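(* Let $A$ be a distributive meet-complemented lattice in which $\Box x$, $\Diamond x$ exist for every $x\in A$ and in which the relative meet-complement $a\to b=\max\{c\in A: a\wedge c\le b\}$ exists for all $a,b\in A$. Then for all $a,b\in A$: (1) $\Box(a\to b)\le\Box a\to\Box b$; (2) $\Box(a\to b)\le\Diamond a\to\Diamond b$; (3) $\Diamond a\to\Box b\le\Box(a\to b)$.
   Context: A meet-complemented lattice is a lattice $(L,\le)$ such that for every $a\in L$ the element $\neg a=\max\{b\in L: a\wedge b\le c\ \text{for all } c\in L\}$ exists; it is bounded with bottom $0$ and top $1$. For $a\in L$, $\Box a=\max\{b\in L: a\vee\neg b=1\}$ and $\Diamond a=\min\{b\in L: \neg a\vee b=1\}$. *)

From mathcomp Require Import all_boot all_order.
Set Implicit Arguments. Unset Strict Implicit. Unset Printing Implicit Defensive.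
Import Order.TTheory.
Local Open Scope order_scope.

Section Defs.
Context {disp : Order.disp_t} {T : tbDistrLatticeType disp}.

Definition is_greatest (P : T -> Prop) (m : T) : Prop :=
  P m /\ forall x, P x -> x <= m.
Definition is_least (P : T -> Prop) (m : T) : Prop :=
  P m /\ forall x, P x -> m <= x.

Definition is_meet_compl (neg : T -> T) : Prop :=
  forall a, is_greatest (fun b => forall c, a `&` b <= c) (neg a).

Definition is_box (neg box : T -> T) : Prop :=
  forall a, is_greatest (fun b => a `|` neg b = \top) (box a).

Definition is_dia (neg dia : T -> T) : Prop :=
  forall a, is_least (fun b => neg a `|` b = \top) (dia a).

Definition is_rel_meet_compl (imp : T -> T -> T) : Prop :=
  forall a b, is_greatest (fun c => a `&` c <= b) (imp a b).
End Defs.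

(** Everything follows from the characterisations of the operations as extrema
    and one observation: in a distributive lattice, [x <= y] holds as soon as
    [x `&` p <= y] and [x `&` q <= y] for some [p, q] with [p `|` q = \top].
    Covering by [a `|` neg (box a) = \top] or [neg a `|` dia a = \top] splits
    each inequality into two easy cases.  By residuation, (1) and (2) reduce to
    the laws [box x `&` box y <= box (x `&` y)] and
    [dia x `&` box y <= dia (x `&` y)], applied to [a `&` imp a b <= b]. *)
From mathcomp Require Import all_boot all_order.
Import Order.TTheory.
Local Open Scope order_scope.

Section Modal.
Context {disp : Order.disp_t} {A : tbDistrLatticeType disp}
  {neg box dia : A -> A} {imp : A -> A -> A}.
Hypotheses (neg_spec : is_meet_compl neg) (box_spec : is_box neg box)
  (dia_spec : is_dia neg dia) (imp_spec : is_rel_meet_compl imp).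

Lemma le_of_cover {p q x y : A} :
  p `|` q = \top -> x `&` p <= y -> x `&` q <= y -> x <= y.
Proof.
move=> pq_top xp_y xq_y; have -> : x = x `&` (p `|` q) by rewrite pq_top meetx1.
by rewrite meetUr leUx xp_y xq_y.
Qed.

Lemma eq_top_of_cover {p q z : A} :
  p `|` q = \top -> p <= z -> q <= z -> z = \top.
Proof. by move=> pq_top p_z q_z; apply/eqP; rewrite eq_le lex1 -pq_top leUx p_z q_z. Qed.

Lemma meet_neg (a : A) : a `&` neg a = \bot.
Proof. by apply/eqP; rewrite -lex0; apply: (proj1 (neg_spec a)). Qed.

Lemma neg_greatest (a x : A) : a `&` x = \bot -> x <= neg a.
Proof. by move=> ax_bot; apply: (proj2 (neg_spec a)) => c; rewrite ax_bot le0x. Qed.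

Lemma meet_le_neg (x y z : A) : x `&` y <= z -> x `&` neg z <= neg y.
Proof.
move=> xy_z; apply: neg_greatest; apply/eqP; rewrite -lex0 -(meet_neg z).
by rewrite meetCA meetA leI2.
Qed.

Lemma neg_anti (x y : A) : x <= y -> neg y <= neg x.
Proof. by move=> x_y; rewrite -[neg y]meet1x meet_le_neg // meet1x. Qed.

Lemma meet_le_of_le_join_neg (c x y : A) : x <= y `|` neg c -> c `&` x <= y.
Proof.
move=> x_le; apply: (le_trans (leI2 (lexx c) x_le)).
by rewrite meetUr meet_neg joinx0 leIr.
Qed.

Lemma join_box (a : A) : a `|` neg (box a) = \top.
Proof. exact: (proj1 (box_spec a)). Qed.

Lemma box_greatest (a x : A) : a `|` neg x = \top -> x <= box a.
Proof. exact: (proj2 (box_spec a)). Qed.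

Lemma join_dia (a : A) : neg a `|` dia a = \top.
Proof. exact: (proj1 (dia_spec a)). Qed.

Lemma dia_least (a x : A) : neg a `|` x = \top -> dia a <= x.
Proof. exact: (proj2 (dia_spec a)). Qed.

Lemma meet_imp (a b : A) : a `&` imp a b <= b.
Proof. exact: (proj1 (imp_spec a b)). Qed.

Lemma imp_greatest (a b c : A) : a `&` c <= b -> c <= imp a b.
Proof. exact: (proj2 (imp_spec a b)). Qed.

Lemma le_box (x y : A) : x <= y -> box x <= box y.
Proof.
move=> x_y; apply: box_greatest; apply: (eq_top_of_cover (join_box x)).
  exact: lexUl.
exact: lexUr.
Qed.

Lemma box_meet (x y : A) : box x `&` box y <= box (x `&` y).
Proof.
apply: box_greatest; apply: (eq_top_of_cover (join_box x)); last first.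
  by apply/lexUr/neg_anti/leIl.
apply: (le_of_cover (join_box y)); first exact: lexUl.
by apply/lexUr; rewrite meetC; apply/leIxl/neg_anti/leIr.
Qed.

Lemma dia_meet_box (x y : A) : dia x `&` box y <= dia (x `&` y).
Proof.
rewrite meetC; apply/meet_le_of_le_join_neg/dia_least.
apply: (eq_top_of_cover (join_box y)); last by rewrite joinA lexUr.
apply: (le_of_cover (join_dia (x `&` y))); last by rewrite leIxr // lexUr // lexUl.
by rewrite lexUl // meet_le_neg // meetC.
Qed.

Lemma box_imp_le_imp_box (a b : A) : box (imp a b) <= imp (box a) (box b).
Proof. by apply/imp_greatest; rewrite (le_trans (box_meet _ _)) // le_box // meet_imp. Qed.

Lemma box_imp_le_imp_dia (a b : A) : box (imp a b) <= imp (dia a) (dia b).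
Proof.
apply/imp_greatest; rewrite (le_trans (dia_meet_box _ _)) //.
apply: dia_least; apply: (eq_top_of_cover (join_dia b)).
  by rewrite lexUl // neg_anti // meet_imp.
by rewrite lexUr.
Qed.

Lemma imp_dia_box_le_box_imp (a b : A) : imp (dia a) (box b) <= box (imp a b).
Proof.
apply: box_greatest; apply: (eq_top_of_cover (join_dia a)).
  by rewrite lexUl // imp_greatest // meet_neg le0x.
apply: (le_of_cover (join_box b)).
  by rewrite lexUl // leIxr // imp_greatest // leIr.
by rewrite lexUr // meet_le_neg // meet_imp.
Qed.

End Modal.

Theorem proposition27 (disp : Order.disp_t) (A : tbDistrLatticeType disp)
  (neg box dia : A -> A) (imp : A -> A -> A) :
  is_meet_compl neg -> is_box neg box -> is_dia neg dia ->
  is_rel_meet_compl imp ->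
  forall a b : A,
    [/\ box (imp a b) <= imp (box a) (box b),
        box (imp a b) <= imp (dia a) (dia b) &
        imp (dia a) (box b) <= box (imp a b)].
Proof.
move=> neg_spec box_spec dia_spec imp_spec a b; split.
- exact: (box_imp_le_imp_box neg_spec box_spec imp_spec).
- exact: (box_imp_le_imp_dia neg_spec box_spec dia_spec imp_spec).
- exact: (imp_dia_box_le_box_imp neg_spec box_spec dia_spec imp_spec).
Qed.
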